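(* Let $g\ge 3$ and let $(\alpha,\beta)$ be a coherent minimally intersecting filling pair on $S_g$, so $i(\alpha,\beta)=2g-1$. Let $P$ be the $4(2g-1)$-gon obtained by cutting $S_g$ along $\alpha\cup\beta$, and let $a_1,\dots,a_{2(2g-1)}$ be its $\alpha$-sides in cyclic clockwise order. Then there exists an index $i$ such that $a_i$ is not glued to its opposite side $a_{i+(2g-1)}$ (indices taken mod $2(2g-1)$). The same statement holds with $\beta$ in place of $\alpha$.
   Context: $S_g$ is the closed orientable surface of genus $g$. A filling pair is a pair of simple closed curves in minimal position whose complement is a union of open disks. It is minimally intersecting if $i(\alpha,\beta)$ is minimal among filling pairs on $S_g$; for $g\ge 3$ this minimum is $2g-1$. It is coherent if the absolute value of the algebraic intersection number equals the geometric intersection number $i(\alpha,\beta)$. For such a pair with $g\ge3$, the complement $S_g\setminus(\alpha\cup\beta)$ is a single open disk. Its closure is a $4(2g-1)$-gon $P$ whose sides alternate between subarcs of $\alpha$ and subarcs of $\beta$ (subarcs run between consecutive intersection points). Each of the $2g-1$ subarcs of $\alpha$, and each of the $2g-1$ subarcs of $\beta$, appears as exactly two sides of $P$, and $S_g$ is recovered by gluing these pairs of sides. The opposite of the $\alpha$-side $a_i$ is the $\alpha$-side $a_{i+(2g-1)}$. *)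

(* Combinatorial (ribbon-graph / rotation-system) model of a
   pair of transverse simple closed curves alpha, beta on a closed oriented
   surface, whose union alpha \cup beta is a 4-valent graph with n vertices. *)
From mathcomp Require Import all_boot all_algebra all_fingroup.
Set Implicit Arguments.
Unset Strict Implicit.
Unset Printing Implicit Defensive.

(* Intersection points are labelled 'I_n in the order in which alpha visits
   them: alpha = x_0 -> x_1 -> ... -> x_{n-1} -> x_0.  Beta visits them in the
   order p 0, p 1, ..., p (n-1), p 0  (p : {perm 'I_n}).  eps v is the sign of
   the intersection at x_v (true = positive). *)

(* Half-edges (darts) at a vertex: direction 0 = alpha outgoing,
   1 = beta outgoing, 2 = alpha incoming (reversed), 3 = beta incoming. *)
Definition dart (n : nat) := ('I_n * 'I_4)%type.

Definition dA_out : 'I_4 := inord 0.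
Definition dB_out : 'I_4 := inord 1.
Definition dA_in  : 'I_4 := inord 2.
Definition dB_in  : 'I_4 := inord 3.

Definition bnext n (p : {perm 'I_n}) (v : 'I_n) : 'I_n := p (ordS ((p^-1)%g v)).
Definition bprev n (p : {perm 'I_n}) (v : 'I_n) : 'I_n := p (ord_pred ((p^-1)%g v)).

(* edge involution: follow the subarc to its other endpoint *)
Definition theta n (p : {perm 'I_n}) (x : dart n) : dart n :=
  let: (v, d) := x in
  match nat_of_ord d with
  | 0 => (ordS v, dA_in)
  | 1 => (bnext p v, dB_in)
  | 2 => (ord_pred v, dA_out)
  | _ => (bprev p v, dB_out)
  end.

(* rotation (counterclockwise cyclic order of the darts at a vertex):
   at a positive crossing  alpha+, beta+, alpha-, beta-;
   at a negative crossing  alpha+, beta-, alpha-, beta+. *)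
Definition rho n (eps : 'I_n -> bool) (x : dart n) : dart n :=
  let: (v, d) := x in (v, if eps v then ordS d else ord_pred d).

(* face permutation: its orbits are the boundary walks of the complementary
   regions; consecutive darts of an orbit are consecutive sides of the
   corresponding polygon. *)
Definition face n (p : {perm 'I_n}) (eps : 'I_n -> bool) (x : dart n) : dart n :=
  rho eps (theta p x).

(* the complement of alpha \cup beta is a single open disk *)
Definition one_face n (p : {perm 'I_n}) (eps : 'I_n -> bool) : Prop :=
  forall x y : dart n, fconnect (face p eps) x y.

Definition is_alpha_dart n (x : dart n) : bool := ~~ odd x.2.
Definition is_beta_dart n (x : dart n) : bool := odd x.2.

(* the subarc (side of P) carried by a dart: (false, k) = k-th subarc of
   alpha (from x_k to x_{k+1}), (true, k) = k-th subarc of beta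
   (from p k to p (k+1)). *)
Definition subarc n (p : {perm 'I_n}) (x : dart n) : bool * 'I_n :=
  let: (v, d) := x in
  match nat_of_ord d with
  | 0 => (false, v)
  | 1 => (true, (p^-1)%g v)
  | 2 => (false, ord_pred v)
  | _ => (true, ord_pred ((p^-1)%g v))
  end.

(* Starting from a side x0 of P, the sides of the same type (alpha or beta)
   in cyclic order along the boundary of P: the i-th one (i mod 2n). *)
Definition typed_side n (p : {perm 'I_n}) (eps : 'I_n -> bool) (x0 : dart n)
  (i : nat) : dart n :=
  iter (2 * (i %% (2 * n))) (face p eps) x0.

Definition alg_int n (eps : 'I_n -> bool) : int :=
  (\sum_(v < n) (if eps v then 1 else -1))%R.

(* coherent: |algebraic intersection| = geometric intersection (= n, the
   number of intersection points of the pair in minimal position) *)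
Definition coherent n (eps : 'I_n -> bool) : Prop := absz (alg_int eps) = n.

From mathcomp Require Import all_boot all_algebra all_fingroup zify.
Set Implicit Arguments. Unset Strict Implicit. Unset Printing Implicit Defensive.

(* If every side of one type (say alpha) were glued to its opposite side, then
   going half way round the boundary of P, i.e. 2n steps of the face
   permutation F, would act on alpha-darts as the edge involution theta; hence
   theta commutes with F^2 on these darts.  For a coherent pair all crossings
   have the same sign, and this commutation becomes a group relation: the cyclic
   successor map along beta inverts the one along alpha (or vice versa).  Both
   are n-cycles with n = 2g - 1 odd, and an element of odd order inverting y
   commutes with y, forcing y^2 = 1, impossible for an n-cycle with n >= 3. *)

Lemma inverted_by_odd_order_sqr1 (gT : finGroupType) (x y : gT) (n : nat) :
  odd n -> (x ^+ n = 1)%g -> (y ^ x = y^-1)%g -> (y ^+ 2 = 1)%g.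
Proof.
move=> odd_n xn yx.
have fix2 : (y ^ (x ^+ 2) = y)%g by rewrite expg2 conjgM yx conjVg yx invgK.
have x_pow2 : x = (x ^+ 2 ^+ n./2.+1)%g.
  rewrite -expgM (_ : (2 * n./2.+1)%N = n + 1) ?expgD ?xn ?mul1g //.
  by rewrite -{2}(odd_double_half n) odd_n; lia.
have : (y ^ x = y)%g.
  rewrite x_pow2; elim: n./2.+1 => [|k IH]; first by rewrite conjg1.
  by rewrite expgSr conjgM IH fix2.
by rewrite yx => yV; rewrite expg2 -{1}yV mulVg.
Qed.

Lemma coherent_const_sign n (eps : 'I_n -> bool) :
  coherent eps -> exists e, forall v, eps v = e.
Proof.
rewrite /coherent /alg_int (bigID (fun v => eps v)) /=.
rewrite (eq_bigr (fun _ => 1%R)); last by move=> i ->.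
rewrite [X in (_ + X)%R](eq_bigr (fun _ => (-1)%R)); last by move=> i /negbTE ->.
rewrite !GRing.sumr_const GRing.mulNrn.
have := cardC (fun v => eps v); rewrite card_ord.
set a := #|_|; set b := #|_| => card_ab abs_ab.
have [a0|b0] : a = 0 \/ b = 0 by lia.
  by exists false => v; move: (card0_eq a0 v); rewrite /in_mem.
by exists true => v; move: (card0_eq b0 v); rewrite /in_mem /= => /negbFE.
Qed.

Lemma dA_outE : dA_out = Ordinal (isT : 0 < 4). Proof. by apply/val_inj; rewrite /= inordK. Qed.
Lemma dB_outE : dB_out = Ordinal (isT : 1 < 4). Proof. by apply/val_inj; rewrite /= inordK. Qed.
Lemma dA_inE : dA_in = Ordinal (isT : 2 < 4). Proof. by apply/val_inj; rewrite /= inordK. Qed.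
Lemma dB_inE : dB_in = Ordinal (isT : 3 < 4). Proof. by apply/val_inj; rewrite /= inordK. Qed.

Lemma dir_cases (d : 'I_4) : [\/ d = dA_out, d = dB_out, d = dA_in | d = dB_in].
Proof.
rewrite dA_outE dB_outE dA_inE dB_inE.
case: d => [[|[|[|[|m]]]] lt_d4] //.
- by apply: Or41; apply: val_inj.
- by apply: Or42; apply: val_inj.
- by apply: Or43; apply: val_inj.
- by apply: Or44; apply: val_inj.
Qed.

Section Darts.
Variables (n : nat) (p : {perm 'I_n}) (eps : 'I_n -> bool).

Lemma theta_dA_out v : theta p (v, dA_out) = (ordS v, dA_in). Proof. by rewrite dA_outE. Qed.
Lemma theta_dB_out v : theta p (v, dB_out) = (bnext p v, dB_in). Proof. by rewrite dB_outE. Qed.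
Lemma theta_dA_in v : theta p (v, dA_in) = (ord_pred v, dA_out). Proof. by rewrite dA_inE. Qed.
Lemma theta_dB_in v : theta p (v, dB_in) = (bprev p v, dB_out). Proof. by rewrite dB_inE. Qed.

Lemma rho_dA_out v : rho eps (v, dA_out) = (v, if eps v then dB_out else dB_in).
Proof. by rewrite /= dA_outE dB_outE dB_inE; case: (eps v); congr pair; apply: val_inj. Qed.
Lemma rho_dB_out v : rho eps (v, dB_out) = (v, if eps v then dA_in else dA_out).
Proof. by rewrite /= dA_outE dB_outE dA_inE; case: (eps v); congr pair; apply: val_inj. Qed.
Lemma rho_dA_in v : rho eps (v, dA_in) = (v, if eps v then dB_in else dB_out).
Proof. by rewrite /= dA_inE dB_outE dB_inE; case: (eps v); congr pair; apply: val_inj. Qed.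
Lemma rho_dB_in v : rho eps (v, dB_in) = (v, if eps v then dA_out else dA_in).
Proof. by rewrite /= dA_outE dB_inE dA_inE; case: (eps v); congr pair; apply: val_inj. Qed.

Lemma subarc_dA_out v : subarc p (v, dA_out) = (false, v). Proof. by rewrite dA_outE. Qed.
Lemma subarc_dB_out v : subarc p (v, dB_out) = (true, (p^-1)%g v). Proof. by rewrite dB_outE. Qed.
Lemma subarc_dA_in v : subarc p (v, dA_in) = (false, ord_pred v). Proof. by rewrite dA_inE. Qed.
Lemma subarc_dB_in v : subarc p (v, dB_in) = (true, ord_pred ((p^-1)%g v)). Proof. by rewrite dB_inE. Qed.

Lemma bnextK : cancel (bnext p) (bprev p).
Proof. by move=> v; rewrite /bnext /bprev permK ordSK permKV. Qed.
Lemma bprevK : cancel (bprev p) (bnext p).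
Proof. by move=> v; rewrite /bnext /bprev permK ord_predK permKV. Qed.

Lemma thetaK : involutive (theta p).
Proof.
move=> [v d]; case: (dir_cases d) => ->.
- by rewrite theta_dA_out theta_dA_in ordSK.
- by rewrite theta_dB_out theta_dB_in bnextK.
- by rewrite theta_dA_in theta_dA_out ord_predK.
- by rewrite theta_dB_in theta_dB_out bprevK.
Qed.

Lemma rho_inj : injective (rho eps).
Proof.
move=> [v d] [w d'] /=; case=> <-; case: (eps v).
  by move/ordS_inj => ->.
by move/ord_pred_inj => ->.
Qed.

Lemma face_inj : injective (face p eps).
Proof. by move=> x y /rho_inj; apply: (inv_inj thetaK). Qed.

Lemma odd_face x : odd (face p eps x).2 = ~~ odd x.2.
Proof.
case: x => v d; case: (dir_cases d) => ->; rewrite /face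
  ?theta_dA_out ?theta_dB_out ?theta_dA_in ?theta_dB_in
  ?rho_dA_out ?rho_dB_out ?rho_dA_in ?rho_dB_in;
by case: eps; rewrite /= ?dA_outE ?dB_outE ?dA_inE ?dB_inE.
Qed.

Lemma odd_iter_face j x : odd (iter j (face p eps) x).2 = odd j (+) odd x.2.
Proof. by elim: j => [|j IH] //=; rewrite odd_face IH; case: odd; case: odd. Qed.

Lemma eq_subarc y z : subarc p z = subarc p y -> z = y \/ z = theta p y.
Proof.
case: y z => [v d] [w d'].
case: (dir_cases d) => ->; case: (dir_cases d') => ->;
rewrite ?subarc_dA_out ?subarc_dB_out ?subarc_dA_in ?subarc_dB_in
  ?theta_dA_out ?theta_dB_out ?theta_dA_in ?theta_dB_in //;
move/eqP; rewrite xpair_eqE /= => //; move/eqP => vw.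
all: try by [left; rewrite ?vw ?(perm_inj vw) ?(ord_pred_inj vw) ?(perm_inj (ord_pred_inj vw))].
all: right.
- by rewrite -vw ord_predK.
- by rewrite /bnext -vw ord_predK permKV.
- by rewrite vw.
- by rewrite /bprev -vw permKV.
Qed.

End Darts.

Definition alpha_step n : {perm 'I_n} := perm (@ordS_inj n).
Definition beta_step n (p : {perm 'I_n}) : {perm 'I_n} := (alpha_step n ^ p)%g.

Section Steps.
Local Open Scope group_scope.
Variables (n : nat) (p : {perm 'I_n}).
Local Notation s := (alpha_step n).
Local Notation b := (beta_step p).

Lemma alpha_stepE v : s v = ordS v. Proof. by rewrite permE. Qed.
Lemma alpha_stepVE v : s^-1 v = ord_pred v.
Proof. by apply: (@perm_inj _ s); rewrite permKV alpha_stepE ord_predK. Qed.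

Lemma bnextE v : bnext p v = b v.
Proof. by rewrite /beta_step conjgE !permM alpha_stepE. Qed.
Lemma bprevE v : bprev p v = b^-1 v.
Proof. by rewrite /beta_step -conjVg conjgE !permM alpha_stepVE. Qed.

Lemma alpha_step_expn : s ^+ n = 1.
Proof.
apply/permP => v; rewrite permX perm1; apply: val_inj.
have iter_ordS k : val (iter k s v) = (v + k) %% n.
  elim: k => [|k IH] /=; first by rewrite addn0 modn_small.
  by rewrite alpha_stepE /= IH addnS -addn1 modnDml addn1.
by rewrite iter_ordS modnDr modn_small.
Qed.

Lemma beta_step_expn : b ^+ n = 1.
Proof. by rewrite /beta_step -conjXg alpha_step_expn conj1g. Qed.

Hypothesis n_gt2 : 2 < n.

Lemma alpha_step_sqr_neq1 : s ^+ 2 != 1.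
Proof.
apply/eqP => /permP /(_ (Ordinal (ltnW (ltnW n_gt2)))).
rewrite expg2 permM perm1 !alpha_stepE => /(congr1 val) /=.
by rewrite (@modn_small 1) ?modn_small //; apply: ltnW.
Qed.

Lemma beta_step_sqr_neq1 : b ^+ 2 != 1.
Proof. by rewrite /beta_step -conjXg conjg_eq1 alpha_step_sqr_neq1. Qed.

End Steps.

Section ConstantSign.
Local Open Scope group_scope.
Variables (n : nat) (p : {perm 'I_n}) (eps : 'I_n -> bool) (e : bool).
Hypothesis eps_const : forall v, eps v = e.
Local Notation F := (face p eps).
Local Notation s := (alpha_step n).
Local Notation b := (beta_step p).

Local Notation commute_theta_face2 x :=
  (theta p (F (F x)) = F (F (theta p x))).

(* For one of the two signs the darts yield the relation in inverted form. *)
Lemma alpha_step_inverted :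
  (forall v, commute_theta_face2 (v, dB_out)) -> s ^ b^-1 = s^-1.
Proof.
move=> comm; case: e eps_const => eps_c;
  [|apply: invg_inj; rewrite -conjVg invgK];
apply/permP => v; have := comm v;
  rewrite /face !(theta_dB_out, theta_dA_out, theta_dA_in, theta_dB_in,
                  rho_dB_out, rho_dA_out, rho_dA_in, rho_dB_in, eps_c) /=
          ?bnextK ?bprevK ?ordSK ?ord_predK => -[rel];
by rewrite conjgE invgK 2!permM -bnextE -bprevE ?alpha_stepE ?alpha_stepVE.
Qed.

Lemma beta_step_inverted :
  (forall v, commute_theta_face2 (v, dA_out)) -> b ^ s^-1 = b^-1.
Proof.
move=> comm; case: e eps_const => eps_c;
  [apply: invg_inj; rewrite -conjVg invgK|];
apply/permP => v; have := comm v;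
  rewrite /face !(theta_dB_out, theta_dA_out, theta_dA_in, theta_dB_in,
                  rho_dB_out, rho_dA_out, rho_dA_in, rho_dB_in, eps_c) /=
          ?bnextK ?bprevK ?ordSK ?ord_predK => -[rel];
by rewrite conjgE invgK 2!permM -bnextE -bprevE ?alpha_stepE ?alpha_stepVE.
Qed.
End ConstantSign.

Definition opposite_sides_glued n (p : {perm 'I_n}) (eps : 'I_n -> bool)
    (x0 : dart n) : Prop :=
  forall i : 'I_(2 * n),
    subarc p (typed_side p eps x0 i) = subarc p (typed_side p eps x0 (i + n)).

Section OneFace.
Variables (n : nat) (p : {perm 'I_n}) (eps : 'I_n -> bool).
Hypotheses (n_gt0 : 0 < n) (one_face_pe : one_face p eps).
Local Notation F := (face p eps).

Lemma order_face x : fingraph.order F x = n * 4.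
Proof.
have -> : n * 4 = #|{: dart n}| by rewrite card_prod !card_ord.
by apply: eq_card => y; rewrite !inE one_face_pe.
Qed.

Lemma iter_face_full_turn m x : iter (m * (n * 4)) F x = x.
Proof.
rewrite iterM; elim: m => [|m IH] //=.
by rewrite IH -[in iter _ _ x](order_face x) iter_order //; apply: face_inj.
Qed.

Lemma iter_face_half_turn_neq x : iter (n * 2) F x != x.
Proof.
apply/eqP => half_x; have := findex0 F x.
rewrite -{2}half_x findex_iter ?order_face ?ltn_pmul2l //.
by move/eqP; rewrite muln_eq0 orbF; apply/negP; rewrite -lt0n.
Qed.

Lemma typed_sideE x0 m : typed_side p eps x0 m = iter (2 * m) F x0.
Proof.
rewrite /typed_side {2}(divn_eq m (2 * n)) mulnDr addnC iterD.
rewrite (_ : 2 * (_ * _) = m %/ (2 * n) * (n * 4)) ?iter_face_full_turn //.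
by rewrite mulnCA; congr (_ * _); lia.
Qed.

Lemma subarc_half_turn x0 k : opposite_sides_glued p eps x0 ->
  subarc p (iter (n * 2) F (iter (2 * k) F x0)) = subarc p (iter (2 * k) F x0).
Proof.
have lt_k : k %% (2 * n) < 2 * n by rewrite ltn_pmod // muln_gt0.
move=> /(_ (Ordinal lt_k)) /=.
rewrite (_ : typed_side p eps x0 (k %% _) = typed_side p eps x0 k); last first.
  by rewrite /typed_side modn_mod.
rewrite (_ : typed_side p eps x0 (k %% _ + n) = typed_side p eps x0 (k + n)); last first.
  by rewrite /typed_side modnDml.
by rewrite !typed_sideE mulnDr addnC iterD [2 * n]mulnC.
Qed.

Lemma half_turn_theta x0 (y : dart n) :
  opposite_sides_glued p eps x0 -> odd y.2 = odd x0.2 ->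
  iter (n * 2) F y = theta p y.
Proof.
move=> glued y_x0.
have [k <-] : exists k, iter (2 * k) F x0 = y.
  have x0_y := iter_findex (one_face_pe x0 y); set j := findex _ _ _ in x0_y.
  have even_j : ~~ odd j.
    by move: y_x0; rewrite -x0_y odd_iter_face; case: odd; case: odd.
  by exists j./2; rewrite -[RHS]x0_y -[j in RHS]odd_double_half (negbTE even_j) mul2n.
case: (eq_subarc (subarc_half_turn k glued)) => // half_id.
by have := iter_face_half_turn_neq (iter (2 * k) F x0); rewrite half_id eqxx.
Qed.

Lemma theta_face2_comm x0 (y : dart n) :
  opposite_sides_glued p eps x0 -> odd y.2 = odd x0.2 ->
  theta p (F (F y)) = F (F (theta p y)).
Proof.
move=> glued y_x0; have y2_x0 : odd (F (F y)).2 = odd x0.2.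
  by rewrite !odd_face negbK.
by rewrite -!(half_turn_theta glued) // -!iterSr -!iterS.
Qed.

End OneFace.

Lemma exists_unglued_opposite_side n (p : {perm 'I_n}) (eps : 'I_n -> bool) e
    (x0 : dart n) :
  2 < n -> odd n -> one_face p eps -> (forall v, eps v = e) ->
  exists i : 'I_(2 * n),
    subarc p (typed_side p eps x0 i) != subarc p (typed_side p eps x0 (i + n)).
Proof.
move=> n_gt2 odd_n one_face_pe eps_c; have n_gt0 : 0 < n by apply: ltn_trans n_gt2.
apply/existsP; rewrite -negb_forall; apply/negP => /forallP all_glued.
have glued : opposite_sides_glued p eps x0 by move=> i; apply/eqP/all_glued.
have comm (d : 'I_4) v : odd d = odd x0.2 -> theta p (face p eps (face p eps (v, d))) =
                  face p eps (face p eps (theta p (v, d))).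
  by move=> d_x0; apply: (theta_face2_comm n_gt0 one_face_pe glued).
have expVn (x : {perm 'I_n}) : (x ^+ n = 1 -> x^-1 ^+ n = 1)%g.
  by move=> xn; rewrite expgVn xn invg1.
case: (boolP (odd x0.2)) => x0_parity.
- have dB_parity : odd dB_out = odd x0.2 by rewrite dB_outE x0_parity.
  have inv_s := alpha_step_inverted eps_c (fun v => comm dB_out v dB_parity).
  have := inverted_by_odd_order_sqr1 odd_n (expVn _ (beta_step_expn p)) inv_s.
  by apply/eqP; apply: alpha_step_sqr_neq1.
- have dA_parity : odd dA_out = odd x0.2 by rewrite dA_outE (negbTE x0_parity).
  have inv_b := beta_step_inverted eps_c (fun v => comm dA_out v dA_parity).
  have := inverted_by_odd_order_sqr1 odd_n (expVn _ (alpha_step_expn n)) inv_b.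
  by apply/eqP; apply: beta_step_sqr_neq1.
Qed.

Theorem proposition4 (g n : nat) (p : {perm 'I_n}) (eps : 'I_n -> bool) :
  3 <= g ->
  n = 2 * g - 1 ->
  one_face p eps ->
  coherent eps ->
  (forall x0 : dart n, is_alpha_dart x0 ->
     exists i : 'I_(2 * n),
       subarc p (typed_side p eps x0 i) != subarc p (typed_side p eps x0 (i + n)))
  /\
  (forall x0 : dart n, is_beta_dart x0 ->
     exists i : 'I_(2 * n),
       subarc p (typed_side p eps x0 i) != subarc p (typed_side p eps x0 (i + n))).
Proof.
move=> g_ge3 n_def one_face_pe /coherent_const_sign [e eps_c].
have n_gt2 : 2 < n by lia.
have odd_n : odd n.
  by rewrite n_def (_ : 2 * g - 1 = (g.-1).*2.+1) /= ?odd_double //; lia.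
by split=> x0 _; apply: exists_unglued_opposite_side eps_c.
Qed.
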